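(* Let $\mathcal{F}$ be an $N$-dimensional commutative algebra with basis $e_1,\dots,e_N$ and structure constants $a^k_{ij}$, such that $e_1$ is a unity element and $\mathcal{F}$ carries a non-degenerate symmetric inner product $\langle\,,\rangle$ with components $\eta_{ij}$ satisfying the Frobenius condition $\langle a\circ b,c\rangle=\langle a,b\circ c\rangle$. Define $h^{(1)}=\eta_{1p}u^p$ and recursively $h^{(n+1)}=a^i_{jk}u^ju^k\,\partial h^{(n)}/\partial u^i$ for $n\ge1$. Then $\mathcal{F}$ is a Jordan algebra if and only if $h^{(n)}$ is a conserved density for every $n\ge 1$.
   Context: Summation over repeated indices is understood; indices are raised and lowered with $\eta_{ij}$ and its inverse. A conserved density is a function $h(u^1,\dots,u^N)$ satisfying, for all $k,p$, $a^i_{jk}u^j\,\partial^2 h/\partial u^i\partial u^p=a^i_{jp}u^j\,\partial^2 h/\partial u^i\partial u^k$. A commutative algebra is Jordan if $(x\circ y)\circ(x\circ x)=x\circ(y\circ(x\circ x))$ for all $x,y$. *)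

From HB Require Import structures.
From mathcomp Require Import all_boot all_order all_algebra.
From mathcomp Require Import mpoly.
Set Implicit Arguments. Unset Strict Implicit. Unset Printing Implicit Defensive.
Import Order.TTheory GRing.Theory.
Local Open Scope ring_scope.

(* Structure constants: a k i j = a^k_{ij}, i.e. e_i o e_j = \sum_k a^k_{ij} e_k.
   Basis index set 'I_n; the unity e_1 is the index ord0 (so n = N.-1 + 1). *)

Definition amul (R : fieldType) (n : nat) (a : 'I_n -> 'I_n -> 'I_n -> R)
  (x y : 'rV[R]_n) : 'rV[R]_n :=
  \row_k \sum_(i < n) \sum_(j < n) a k i j * x 0 i * y 0 j.

Definition is_Jordan (R : fieldType) (n : nat) (a : 'I_n -> 'I_n -> 'I_n -> R) :=
  forall x y : 'rV[R]_n,
    amul a (amul a x y) (amul a x x) = amul a x (amul a y (amul a x x)).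

(* h^(1) = eta_{1p} u^p ; h^(m+1) = a^i_{jk} u^j u^k dh^(m)/du^i.
   hdens a eta m is h^(m+1). *)
Fixpoint hdens (R : fieldType) (n : nat) (a : 'I_n.+1 -> 'I_n.+1 -> 'I_n.+1 -> R)
  (eta : 'M[R]_n.+1) (m : nat) : {mpoly R[n.+1]} :=
  match m with
  | 0 => \sum_(p < n.+1) eta ord0 p *: 'X_p
  | m'.+1 => \sum_(i < n.+1) \sum_(j < n.+1) \sum_(k < n.+1)
               a i j k *: ('X_j * 'X_k * mderiv i (hdens a eta m'))
  end.

Definition conserved_density (R : fieldType) (n : nat)
  (a : 'I_n -> 'I_n -> 'I_n -> R) (h : {mpoly R[n]}) :=
  forall k p : 'I_n,
    \sum_(i < n) \sum_(j < n) a i j k *: ('X_j * mderiv p (mderiv i h)) =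
    \sum_(i < n) \sum_(j < n) a i j p *: ('X_j * mderiv k (mderiv i h)).

(* Write h^(m+1) = th (W m), where th x = <e_1, x>, W 0 = u and
   W (m+1) = D_{u o u} (W m), D_v denoting the derivative in the direction v.
   If the algebra is Jordan, then in characteristic 0 its fully polarized
   identity is multilinear, hence also holds over the polynomial ring.  There
   the multiplications by u, u o u and the powers u^(r+1) commute, so that
   W m = m! u^(m+1), and the derivative Phi v of u^(m+1) in the direction v
   commutes with multiplication by u and is self-adjoint for th.  The
   conservation condition for th (u^(m+1)) then reduces to the symmetry of
   th (e_p o Phi e_k) and of the second derivatives of u^(m+1).
   Conversely, h^(4) = 6 th ((u o u) o (u o u)), and its conservation
   condition says that <e_p, (u o u) o (u o e_k)> = <e_p, u o ((u o u) o e_k)>;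
   by non-degeneracy this is the Jordan identity at the generic point u. *)

From HB Require Import structures.
From mathcomp Require Import all_boot all_order all_algebra.
From mathcomp Require Import mpoly.
From mathcomp Require Import ring.
Set Implicit Arguments. Unset Strict Implicit. Unset Printing Implicit Defensive.
Import GRing.Theory.
Local Open Scope ring_scope.

Section LinearRow.
Variables (S : pzRingType) (V : lmodType S) (N : nat) (g : 'rV[S]_N -> V).
Hypothesis g_linear : linear g.

#[local] HB.instance Definition _ := GRing.isLinear.Build S _ _ _ g g_linear.

Lemma linear_rowD u v : g (u + v) = g u + g v.
Proof. exact: linearD. Qed.

Lemma linear_row_expand x : g x = \sum_(j < N) x 0 j *: g 'e_j.
Proof. by rewrite {1}(row_sum_delta x) linear_sum; apply: eq_bigr => j _; rewrite linearZ. Qed.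

End LinearRow.

Lemma linear_row_eq (S : pzRingType) (V : lmodType S) (N : nat) (g h : 'rV[S]_N -> V) :
  linear g -> linear h -> (forall j, g 'e_j = h 'e_j) -> g =1 h.
Proof.
move=> gL hL gh x; rewrite (linear_row_expand gL) (linear_row_expand hL).
by apply: eq_bigr => j _; rewrite gh.
Qed.

(** * Polarization of cubic forms *)

Section CubicPolarization.
Variables (T : zmodType) (S : comPzRingType) (F : T -> T -> T -> S).
Hypotheses (FD1 : forall u v y z, F (u + v) y z = F u y z + F v y z)
           (FD2 : forall x u v z, F x (u + v) z = F x u z + F x v z)
           (FD3 : forall x y u v, F x y (u + v) = F x y u + F x y v).

Lemma cubic_polarize : GRing.lreg (2 : S) ->
  (forall x, F x x x = 0) -> forall x z, F z x x + F x z x + F x x z = 0.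
Proof.
move=> two_reg F0 x z; apply: two_reg; rewrite mulr0.
have -> : 2 * (F z x x + F x z x + F x x z) =
    F (z + (x + x)) (z + (x + x)) (z + (x + x)) - 2 * F (z + x) (z + x) (z + x)
    + F z z z - 6 * F x x x.
  by rewrite !(FD1, FD2, FD3); ring.
by rewrite !F0; ring.
Qed.

Lemma cubic_polarize_full : (forall x z, F z x x + F x z x + F x x z = 0) ->
  forall x1 x2 z, F z x1 x2 + F z x2 x1 + F x1 z x2 + F x2 z x1 + F x1 x2 z + F x2 x1 z = 0.
Proof.
move=> F1 x1 x2 z.
have -> : F z x1 x2 + F z x2 x1 + F x1 z x2 + F x2 z x1 + F x1 x2 z + F x2 x1 z =
    (F z (x1 + x2) (x1 + x2) + F (x1 + x2) z (x1 + x2) + F (x1 + x2) (x1 + x2) z)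
    - (F z x1 x1 + F x1 z x1 + F x1 x1 z) - (F z x2 x2 + F x2 z x2 + F x2 x2 z).
  by rewrite !(FD1, FD2, FD3); ring.
by rewrite !F1; ring.
Qed.

Lemma cubic_depolarize_full : GRing.lreg (2 : S) ->
  (forall x1 x2 z, F z x1 x2 + F z x2 x1 + F x1 z x2 + F x2 z x1 + F x1 x2 z + F x2 x1 z = 0) ->
  forall x z, F z x x + F x z x + F x x z = 0.
Proof.
move=> two_reg F2 x z; apply: two_reg; rewrite mulr0 -(F2 x x z); ring.
Qed.

Lemma cubic_depolarize : GRing.lreg (3 : S) ->
  (forall x z, F z x x + F x z x + F x x z = 0) -> forall x, F x x x = 0.
Proof.
move=> three_reg F1 x; apply: three_reg; rewrite mulr0 -(F1 x x); ring.
Qed.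

End CubicPolarization.

(** * Algebras given by structure constants *)

Section Product.
Variables (S : comPzRingType) (N : nat) (c : 'I_N -> 'I_N -> 'I_N -> S).
Local Notation V := 'rV[S]_N.

Definition cmul_def (x y : V) : V :=
  \row_k \sum_(i < N) \sum_(j < N) c k i j * x 0 i * y 0 j.
Fact cmul_key : unit. Proof. exact: tt. Qed.
Definition cmul := locked_with cmul_key cmul_def.

Local Notation "x *o y" := (cmul x y) (at level 40, left associativity).

Lemma cmulE x y k : (x *o y) 0 k = \sum_(i < N) \sum_(j < N) c k i j * x 0 i * y 0 j.
Proof. by rewrite [cmul]unlock mxE. Qed.

Lemma cmul_is_linear x : linear (cmul x).
Proof.
move=> s u v; apply/rowP => k; rewrite !(cmulE, mxE) mulr_sumr -big_split /=.
apply: eq_bigr => i _; rewrite mulr_sumr -big_split /=.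
by apply: eq_bigr => j _; rewrite !mxE; ring.
Qed.

HB.instance Definition _ x := GRing.isLinear.Build S V V *:%R (cmul x) (cmul_is_linear x).

Lemma cmulDr x : {morph cmul x : u v / u + v}. Proof. exact: linearD. Qed.
Lemma cmulZr x s : {morph cmul x : u / s *: u}. Proof. exact: linearZ. Qed.
Lemma cmul0r x : x *o 0 = 0. Proof. exact: linear0. Qed.
Lemma cmulBr x : {morph cmul x : u v / u - v}. Proof. exact: linearB. Qed.
Lemma cmulMnr x m : {morph cmul x : u / u *+ m}. Proof. exact: linearMn. Qed.
Lemma cmul_sumr x I r (P : pred I) (F : I -> V) :
  x *o (\sum_(i <- r | P i) F i) = \sum_(i <- r | P i) x *o F i.
Proof. exact: linear_sum. Qed.

Hypothesis cC : forall k i j, c k i j = c k j i.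

Lemma cmulC x y : x *o y = y *o x.
Proof.
apply/rowP => k; rewrite !cmulE exchange_big /=.
by apply: eq_bigr => i _; apply: eq_bigr => j _; rewrite cC; ring.
Qed.

Lemma cmulDl y : {morph cmul^~ y : u v / u + v}.
Proof. by move=> u v; rewrite !(cmulC _ y) cmulDr. Qed.
Lemma cmulZl y s : {morph cmul^~ y : u / s *: u}.
Proof. by move=> u; rewrite !(cmulC _ y) cmulZr. Qed.
Lemma cmulMnl y m : {morph cmul^~ y : u / u *+ m}.
Proof. by move=> u; rewrite !(cmulC _ y) cmulMnr. Qed.
Lemma cmul_suml y I r (P : pred I) (F : I -> V) :
  (\sum_(i <- r | P i) F i) *o y = \sum_(i <- r | P i) F i *o y.
Proof. by rewrite cmulC cmul_sumr; apply: eq_bigr => i _; rewrite cmulC. Qed.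

End Product.

Lemma eq_cmul (S : comPzRingType) N (c c' : 'I_N -> 'I_N -> 'I_N -> S) (x y : 'rV_N) :
  (forall k i j, c k i j = c' k i j) -> cmul c x y = cmul c' x y.
Proof.
move=> cc'; apply/rowP => k; rewrite !cmulE.
by apply: eq_bigr => i _; apply: eq_bigr => j _; rewrite cc'.
Qed.

Lemma map_cmul (S S' : comPzRingType) N (c : 'I_N -> 'I_N -> 'I_N -> S)
    (f : {rmorphism S -> S'}) (x y : 'rV_N) :
  map_mx f (cmul c x y) = cmul (fun k i j => f (c k i j)) (map_mx f x) (map_mx f y).
Proof.
apply/rowP => k; rewrite cmulE !mxE cmulE rmorph_sum; apply: eq_bigr => i _.
by rewrite rmorph_sum; apply: eq_bigr => j _; rewrite !mxE !rmorphM.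
Qed.

(* The entries produced by mxE carry different, convertible type annotations,
   which ring would take for distinct atoms: generalize them first. *)
Local Ltac cmul_ring :=
  apply/rowP => ?; rewrite !mxE;
  repeat (let t := fresh "t" in set t := fun_of_matrix (cmul _ _) _ _; clearbody t; simpl in t);
  ring.

Section JordanIdentity.
Variables (S : comPzRingType) (N : nat) (c : 'I_N -> 'I_N -> 'I_N -> S).
Hypothesis cC : forall k i j, c k i j = c k j i.
Local Notation V := 'rV[S]_N.
Local Notation "x *o y" := (cmul c x y) (at level 40, left associativity).

Definition jordan_identity := forall x y : V, (x *o y) *o (x *o x) = x *o (y *o (x *o x)).

Definition jordan_assoc x1 x2 x3 y : V :=
  (x1 *o y) *o (x2 *o x3) - x1 *o (y *o (x2 *o x3)).

Definition jordan_full x1 x2 z y : V :=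
  jordan_assoc z x1 x2 y + jordan_assoc z x2 x1 y + jordan_assoc x1 z x2 y
  + jordan_assoc x2 z x1 y + jordan_assoc x1 x2 z y + jordan_assoc x2 x1 z y.

Local Ltac linear_by_entries :=
  move=> ? ? ?; rewrite /jordan_full /jordan_assoc !(cmulDl cC, cmulZl cC, cmulDr, cmulZr);
  cmul_ring.

Lemma jordan_assoc_linear1 x2 x3 y : linear (fun x => jordan_assoc x x2 x3 y).
Proof. linear_by_entries. Qed.
Lemma jordan_assoc_linear2 x1 x3 y : linear (fun x => jordan_assoc x1 x x3 y).
Proof. linear_by_entries. Qed.
Lemma jordan_assoc_linear3 x1 x2 y : linear (fun x => jordan_assoc x1 x2 x y).
Proof. linear_by_entries. Qed.

Lemma jordan_full_linear1 x2 z y : linear (fun x => jordan_full x x2 z y).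
Proof. linear_by_entries. Qed.
Lemma jordan_full_linear2 x1 z y : linear (fun x => jordan_full x1 x z y).
Proof. linear_by_entries. Qed.
Lemma jordan_full_linear3 x1 x2 y : linear (fun x => jordan_full x1 x2 x y).
Proof. linear_by_entries. Qed.
Lemma jordan_full_linear4 x1 x2 z : linear (jordan_full x1 x2 z).
Proof. linear_by_entries. Qed.

Lemma jordan_full_basis :
  (forall i j k l, jordan_full 'e_i 'e_j 'e_k 'e_l = 0) ->
  forall x1 x2 z y, jordan_full x1 x2 z y = 0.
Proof.
have lin0 : linear (fun _ : V => 0 : V) by move=> s u v; rewrite scaler0 addr0.
move=> basis0 x1 x2 z y.
apply: (linear_row_eq (jordan_full_linear1 x2 z y) lin0) => i.
apply: (linear_row_eq (jordan_full_linear2 _ z y) lin0) => j.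
apply: (linear_row_eq (jordan_full_linear3 _ _ y) lin0) => k.
exact: (linear_row_eq (jordan_full_linear4 _ _ _) lin0).
Qed.

Definition jordan_lin x z y : V :=
  jordan_assoc z x x y + jordan_assoc x z x y + jordan_assoc x x z y.

Section Polarization.
Variable y : V.
Let F k x1 x2 x3 := jordan_assoc x1 x2 x3 y 0 k.

Let FD1 k u v x2 x3 : F k (u + v) x2 x3 = F k u x2 x3 + F k v x2 x3.
Proof. by rewrite /F (linear_rowD (jordan_assoc_linear1 _ _ _)) mxE. Qed.
Let FD2 k x1 u v x3 : F k x1 (u + v) x3 = F k x1 u x3 + F k x1 v x3.
Proof. by rewrite /F (linear_rowD (jordan_assoc_linear2 _ _ _)) mxE. Qed.
Let FD3 k x1 x2 u v : F k x1 x2 (u + v) = F k x1 x2 u + F k x1 x2 v.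
Proof. by rewrite /F (linear_rowD (jordan_assoc_linear3 _ _ _)) mxE. Qed.

Let jordan_lin_entry k x z : jordan_lin x z y 0 k = F k z x x + F k x z x + F k x x z.
Proof. by rewrite /jordan_lin /F !mxE. Qed.

Let jordan_full_entry k x1 x2 z :
  jordan_full x1 x2 z y 0 k =
  F k z x1 x2 + F k z x2 x1 + F k x1 z x2 + F k x2 z x1 + F k x1 x2 z + F k x2 x1 z.
Proof. by rewrite /jordan_full /F !mxE. Qed.

Lemma jordan_lin_of_assoc : GRing.lreg (2 : S) ->
  (forall x, jordan_assoc x x x y = 0) -> forall x z, jordan_lin x z y = 0.
Proof.
move=> two_reg J0 x z; apply/rowP => k; rewrite jordan_lin_entry mxE.
by apply: (cubic_polarize (FD1 k) (FD2 k) (FD3 k) two_reg) => u; rewrite /F J0 mxE.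
Qed.

Lemma jordan_full_of_lin :
  (forall x z, jordan_lin x z y = 0) -> forall x1 x2 z, jordan_full x1 x2 z y = 0.
Proof.
move=> L0 x1 x2 z; apply/rowP => k; rewrite jordan_full_entry mxE.
by apply: (cubic_polarize_full (FD1 k) (FD2 k) (FD3 k)) => u w; rewrite -jordan_lin_entry L0 mxE.
Qed.

Lemma jordan_lin_of_full : GRing.lreg (2 : S) ->
  (forall x1 x2 z, jordan_full x1 x2 z y = 0) -> forall x z, jordan_lin x z y = 0.
Proof.
move=> two_reg B0 x z; apply/rowP => k; rewrite jordan_lin_entry mxE.
apply: (cubic_depolarize_full two_reg) => u1 u2 w.
by rewrite -jordan_full_entry B0 mxE.
Qed.

Lemma jordan_assoc_of_lin : GRing.lreg (3 : S) ->
  (forall x z, jordan_lin x z y = 0) -> forall x, jordan_assoc x x x y = 0.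
Proof.
move=> three_reg L0 x; apply/rowP => k; rewrite [RHS]mxE; change (F k x x x = 0).
by apply: (cubic_depolarize three_reg) => u w; rewrite -jordan_lin_entry L0 mxE.
Qed.

End Polarization.

Lemma jordan_identityP : jordan_identity <-> forall x y, jordan_assoc x x x y = 0.
Proof.
split=> J x y; first by apply/eqP; rewrite subr_eq0 J.
by apply/eqP; rewrite -subr_eq0; apply/eqP; apply: J.
Qed.

End JordanIdentity.

Lemma map_jordan_full (S S' : comPzRingType) N (c : 'I_N -> 'I_N -> 'I_N -> S)
    (f : {rmorphism S -> S'}) (x1 x2 z y : 'rV_N) :
  map_mx f (jordan_full c x1 x2 z y) =
  jordan_full (fun k i j => f (c k i j)) (map_mx f x1) (map_mx f x2) (map_mx f z) (map_mx f y).
Proof. by rewrite /jordan_full /jordan_assoc !(map_mxD, map_mxN, map_cmul). Qed.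

(** * Powers in a commutative Jordan algebra *)

Section JordanPowers.
Variables (S : comPzRingType) (N : nat) (c : 'I_N -> 'I_N -> 'I_N -> S).
Hypothesis cC : forall k i j, c k i j = c k j i.
Local Notation V := 'rV[S]_N.
Local Notation "x *o y" := (cmul c x y) (at level 40, left associativity).

(* cpow x r is the (r+1)-th power x o (x o ... x), and dcpow x r v is its
   derivative at x in the direction v. *)
Fixpoint cpow x r := if r is r'.+1 then x *o cpow x r' else x.

Fixpoint dcpow x r v := if r is r'.+1 then v *o cpow x r' + x *o dcpow x r' v else v.

Lemma derivation_cpow (D : V -> V) x r :
  (forall u w, D (u *o w) = D u *o w + u *o D w) -> D (cpow x r) = dcpow x r (D x).
Proof. by move=> DM; elim: r => [|r IHr] //=; rewrite DM IHr. Qed.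

Section Derivation.
Variable D : V -> V.
Hypothesis DM : forall u w, D (u *o w) = D u *o w + u *o D w.

Lemma derivation_sqr x : D (x *o x) = (x *o D x) *+ 2.
Proof. by rewrite DM (cmulC cC) mulr2n. Qed.

Lemma derivation_sqr_sqr x : D ((x *o x) *o (x *o x)) = ((x *o x) *o (x *o D x)) *+ 4.
Proof.
by rewrite DM derivation_sqr (cmulMnl cC) cmulMnr (cmulC cC (_ *o D x)) -mulrnDr.
Qed.

End Derivation.

Hypotheses (two_reg : GRing.lreg (2 : S)) (J : jordan_identity c).
Variable x : V.

Lemma jordan_lin_comm y z :
  (y *o z) *o (x *o x) + ((x *o y) *o (x *o z)) *+ 2 =
  z *o (y *o (x *o x)) + (x *o (y *o (x *o z))) *+ 2.
Proof.
have L0 := jordan_lin_of_assoc cC two_reg ((jordan_identityP c).1 J ^~ y).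
apply/eqP; rewrite -subr_eq0 -(L0 x z) /jordan_lin /jordan_assoc (cmulC cC z x) (cmulC cC z y).
apply/eqP; cmul_ring.
Qed.

Lemma cmul_sqr_comm w : x *o ((x *o x) *o w) = (x *o x) *o (x *o w).
Proof. by have := J x w; rewrite !(cmulC cC _ (x *o x)) => ->. Qed.

Lemma cmul_sqr_cpow r : (x *o x) *o cpow x r = cpow x r.+2.
Proof.
elim: r => [|r IHr]; first by rewrite /= (cmulC cC).
by rewrite [cpow x r.+1]/= -cmul_sqr_comm IHr.
Qed.

Lemma cmul_cpowSS r w :
  cpow x r.+2 *o w = (x *o x) *o (cpow x r *o w) + (cpow x r.+1 *o (x *o w)) *+ 2
                     - (x *o (cpow x r *o (x *o w))) *+ 2.
Proof.
have := jordan_lin_comm (cpow x r) w.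
rewrite (cmulC cC (cpow x r) (x *o x)) cmul_sqr_cpow (cmulC cC (cpow x r *o w)) -/(cpow x r.+1).
by move=> e; rewrite (cmulC cC _ w) e addrK.
Qed.

Let commutes_with_cpow r :=
  (forall w, x *o (cpow x r *o w) = cpow x r *o (x *o w)) /\
  (forall w, (x *o x) *o (cpow x r *o w) = cpow x r *o ((x *o x) *o w)).

Lemma cpow_comm r : commutes_with_cpow r.
Proof.
suff : commutes_with_cpow r /\ commutes_with_cpow r.+1 by case.
rewrite /commutes_with_cpow; elim: r => [|r [[Cr1 Cr2] [Cs1 Cs2]]].
  by do !split; move=> w /=; rewrite ?cmul_sqr_comm.
split=> //; split=> w; rewrite !cmul_cpowSS !(cmulBr, cmulDr, cmulMnr).
  by congr (_ + _ - _); rewrite ?cmul_sqr_comm ?Cr1 ?Cs1 ?Cr1.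
congr (_ + _ - _); first by rewrite Cr2.
  by rewrite Cs2 cmul_sqr_comm.
by rewrite -cmul_sqr_comm Cr2 cmul_sqr_comm.
Qed.

Lemma dcpow_cmul r v : dcpow x r (x *o v) = x *o dcpow x r v.
Proof.
elim: r v => [|r IHr] v //=.
rewrite IHr cmulDr; congr (_ + _).
by rewrite (cmulC cC) -(proj1 (cpow_comm r)) (cmulC cC v).
Qed.

Lemma dcpow_sqr r : dcpow x r (x *o x) = cpow x r.+1 *+ r.+1.
Proof. by elim: r => [|r IHr] //=; rewrite IHr cmulMnr cmul_sqr_cpow [in RHS]mulrS. Qed.

Lemma dcpow_adjoint (th : V -> S) r u v :
  {morph th : a b / a + b} ->
  (forall a b d, th ((a *o b) *o d) = th (a *o (b *o d))) ->
  th (u *o dcpow x r v) = th (dcpow x r u *o v).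
Proof.
move=> thD thA; elim: r u v => [|r IHr] u v //=.
rewrite cmulDr (cmulDl cC) !thD; congr (_ + _); first by rewrite thA (cmulC cC (cpow x r) v).
by rewrite -thA IHr (cmulC cC u) dcpow_cmul.
Qed.

End JordanPowers.

(** * Frobenius forms *)

Section FrobeniusForm.
Variables (S : comPzRingType) (N : nat) (c : 'I_N -> 'I_N -> 'I_N -> S).
Variables (o : 'I_N) (eta : 'M[S]_N).
Local Notation V := 'rV[S]_N.
Local Notation "x *o y" := (cmul c x y) (at level 40, left associativity).

Definition frob_form (x : V) : S := \sum_p eta o p * x 0 p.

Lemma frob_form_is_linear : scalar frob_form.
Proof.
move=> s u v; rewrite /frob_form mulr_sumr -big_split /=.
by apply: eq_bigr => p _; rewrite !mxE; ring.
Qed.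

HB.instance Definition _ := GRing.isLinear.Build S V S *%R frob_form frob_form_is_linear.

Definition bform (x y : V) : S := \sum_i \sum_j eta i j * x 0 i * y 0 j.

Lemma bform_cmul_l x y z : bform (x *o y) z =
  \sum_i \sum_j \sum_l (\sum_k c k i j * eta k l) * x 0 i * y 0 j * z 0 l.
Proof.
rewrite /bform.
under eq_bigr => k _ do under eq_bigr => l _ do
  (rewrite cmulE mulr_sumr mulr_suml; under eq_bigr => i _ do rewrite mulr_sumr mulr_suml).
under eq_bigr => k _ do (rewrite exchange_big; under eq_bigr => i _ do rewrite exchange_big).
rewrite exchange_big; under eq_bigr => i _ do
  (rewrite exchange_big; under eq_bigr => j _ do rewrite exchange_big).
apply: eq_bigr => i _; apply: eq_bigr => j _; apply: eq_bigr => l _.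
by rewrite !mulr_suml; apply: eq_bigr => k _ /=; ring.
Qed.

Lemma bform_cmul_r x y z : bform x (y *o z) =
  \sum_i \sum_j \sum_l (\sum_k eta i k * c k j l) * x 0 i * y 0 j * z 0 l.
Proof.
rewrite /bform; apply: eq_bigr => i _.
under eq_bigr => k _ do (rewrite cmulE mulr_sumr; under eq_bigr => j _ do rewrite mulr_sumr).
rewrite exchange_big; apply: eq_bigr => j _; rewrite exchange_big; apply: eq_bigr => l _ /=.
by rewrite !mulr_suml; apply: eq_bigr => k _; ring.
Qed.

Hypothesis frob : forall i j l,
  \sum_k c k i j * eta k l = \sum_k eta i k * c k j l.

Lemma bform_cmulA x y z : bform (x *o y) z = bform x (y *o z).
Proof.
rewrite bform_cmul_l bform_cmul_r.
by apply: eq_bigr => i _; apply: eq_bigr => j _; apply: eq_bigr => l _; rewrite frob.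
Qed.

Hypothesis unit_o : forall k j, c k o j = (k == j)%:R.

Lemma frob_form_cmul x y : frob_form (x *o y) = bform x y.
Proof.
have eta_o i j : \sum_p eta o p * c p i j = eta i j.
  rewrite -frob (bigD1 i) //= unit_o eqxx mul1r big1 ?addr0 // => k /negbTE ki.
  by rewrite unit_o ki mul0r.
rewrite /frob_form /bform.
under eq_bigr => p _ do (rewrite cmulE mulr_sumr; under eq_bigr => i _ do rewrite mulr_sumr).
rewrite exchange_big; apply: eq_bigr => i _; rewrite exchange_big; apply: eq_bigr => j _ /=.
by rewrite -eta_o !mulr_suml; apply: eq_bigr => p _; ring.
Qed.

Lemma frob_formA x y z : frob_form ((x *o y) *o z) = frob_form (x *o (y *o z)).
Proof. by rewrite !frob_form_cmul bform_cmulA. Qed.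

Hypothesis cC : forall k i j, c k i j = c k j i.

Lemma frob_form_cmulCA x u w : frob_form (u *o (x *o w)) = frob_form (w *o (x *o u)).
Proof. by rewrite -frob_formA (cmulC cC u x) cmulC. Qed.

End FrobeniusForm.

Lemma bform_deltal (S : comPzRingType) N (eta : 'M[S]_N) p (z : 'rV[S]_N) :
  bform eta 'e_p z = (z *m eta^T) 0 p.
Proof.
rewrite /bform (bigD1 p) //= [X in _ + X]big1 ?addr0; last first.
  by move=> i /negbTE ip; apply: big1 => j _; rewrite mxE ip andbF mulr0 mul0r.
rewrite [RHS]mxE; apply: eq_bigr => j _; by rewrite !mxE !eqxx /= mulr1 mulrC.
Qed.

Lemma bform_nondeg (S : comUnitRingType) N (eta : 'M[S]_N) (z : 'rV[S]_N) :
  eta \in unitmx -> (forall p, bform eta 'e_p z = 0) -> z = 0.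
Proof.
move=> eta_unit z0; have etaT_unit : eta^T \in unitmx by rewrite unitmx_tr.
rewrite -(mulmxK etaT_unit z); suff -> : z *m eta^T = 0 by rewrite mul0mx.
by apply/rowP => p; rewrite -bform_deltal z0 mxE.
Qed.

(** * The densities as Frobenius forms of polynomial vectors *)

Lemma mderivXU (R : nzRingType) m (i k : 'I_m) :
  mderiv i ('X_k : {mpoly R[m]}) = (k == i)%:R.
Proof.
rewrite mderivX mnm1E; case: eqP => [->|_]; last by rewrite scale0r.
suff -> : (U_(i) - U_(i))%MM = 0%MM by rewrite mpolyX0 scale1r.
by apply/mnmP => j; rewrite !mnmE subnn.
Qed.

Section Densities.
Variables (R : fieldType) (n : nat) (a : 'I_n.+1 -> 'I_n.+1 -> 'I_n.+1 -> R).
Variable eta : 'M[R]_n.+1.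
Local Notation N := n.+1.
Local Notation K := {mpoly R[N]}.
Local Notation V := 'rV[K]_N.
Local Notation aK := (fun k i j => (a k i j)%:MP : K).
Local Notation "x *o y" := (cmul aK x y) (at level 40, left associativity).
Local Notation th := (frob_form ord0 (map_mx (@mpolyC N R) eta)).

Definition uvec : V := \row_i 'X_i.

Definition vderiv i (x : V) : V := map_mx (mderiv i) x.

Lemma vderiv_is_zmod_morphism i : zmod_morphism (vderiv i).
Proof. exact: raddfB. Qed.

HB.instance Definition _ i :=
  GRing.isZmodMorphism.Build V V (vderiv i) (vderiv_is_zmod_morphism i).

Definition dirderiv (v x : V) : V := \sum_i v 0 i *: vderiv i x.

Lemma dirderiv_is_zmod_morphism v : zmod_morphism (dirderiv v).
Proof.
by move=> x y; rewrite /dirderiv -sumrB; apply: eq_bigr => i _; rewrite raddfB scalerBr.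
Qed.

HB.instance Definition _ v :=
  GRing.isZmodMorphism.Build V V (dirderiv v) (dirderiv_is_zmod_morphism v).

Lemma vderiv_cmul i x y : vderiv i (x *o y) = vderiv i x *o y + x *o vderiv i y.
Proof.
apply/rowP => k; rewrite !(mxE, cmulE) raddf_sum -big_split /=.
apply: eq_bigr => p _; rewrite raddf_sum -big_split /=; apply: eq_bigr => q _.
by rewrite !mxE !mderivM mderivC; ring.
Qed.

Lemma vderiv_uvec i : vderiv i uvec = 'e_i.
Proof. by apply/rowP => k; rewrite !mxE mderivXU. Qed.

Lemma vderivZ i s x : vderiv i (s *: x) = mderiv i s *: x + s *: vderiv i x.
Proof. by apply/rowP => k; rewrite !mxE mderivM. Qed.

Lemma vderiv_delta i k : vderiv i 'e_k = 0.
Proof. by apply/rowP => j; rewrite !mxE -mpolyC_nat mderivC. Qed.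

Lemma vderivC i j x : vderiv i (vderiv j x) = vderiv j (vderiv i x).
Proof. by apply/rowP => k; rewrite !mxE mderiv_comm. Qed.

Hypothesis aC : forall k i j, a k i j = a k j i.

Let aKC k i j : aK k i j = aK k j i. Proof. by rewrite /= aC. Qed.

Lemma dirderiv_cmul v x y : dirderiv v (x *o y) = dirderiv v x *o y + x *o dirderiv v y.
Proof.
rewrite /dirderiv (cmul_suml aKC) cmul_sumr -big_split /=; apply: eq_bigr => i _.
by rewrite vderiv_cmul scalerDr (cmulZl aKC) cmulZr.
Qed.

Lemma dirderiv_uvec v : dirderiv v uvec = v.
Proof.
by rewrite [RHS]row_sum_delta; apply: eq_bigr => i _; rewrite vderiv_uvec.
Qed.

Lemma frob_form_vderiv i x : mderiv i (th x) = th (vderiv i x).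
Proof. by rewrite /frob_form raddf_sum /=; apply: eq_bigr => p _; rewrite !mxE mderiv_mulC. Qed.

Lemma frob_form_dirderiv v x : th (dirderiv v x) = \sum_i v 0 i * mderiv i (th x).
Proof. by rewrite raddf_sum /=; apply: eq_bigr => i _; rewrite linearZ frob_form_vderiv. Qed.

Fixpoint hvec m : V := if m is m'.+1 then dirderiv (uvec *o uvec) (hvec m') else uvec.

Lemma hdens_hvec m : hdens a eta m = th (hvec m).
Proof.
elim: m => [|m IHm] /=.
  by rewrite /frob_form; apply: eq_bigr => p _; rewrite !mxE mul_mpolyC.
rewrite frob_form_dirderiv -IHm; apply: eq_bigr => i _.
rewrite cmulE mulr_suml; apply: eq_bigr => j _; rewrite mulr_suml; apply: eq_bigr => k _.
by rewrite !mxE -mul_mpolyC !mulrA.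
Qed.

Definition conservation_form (X : V) k p : K :=
  th (vderiv p (dirderiv (uvec *o 'e_k) X)) - th (dirderiv ('e_p *o 'e_k) X).

Lemma conservation_formMn X m k p :
  conservation_form (X *+ m) k p = conservation_form X k p *+ m.
Proof. by rewrite /conservation_form !raddfMn [RHS]mulrnDl. Qed.

Lemma cmul_uvec_delta_entry k i : (uvec *o 'e_k) 0 i = \sum_j (a i j k)%:MP * 'X_j.
Proof.
rewrite cmulE; apply: eq_bigr => j _; rewrite (bigD1 k) //= big1 ?addr0 => [|l /negbTE lk].
  by rewrite !mxE !eqxx mulr1.
by rewrite !mxE lk mulr0.
Qed.

Lemma vderiv_cmul_uvec_delta p k : vderiv p (uvec *o 'e_k) = 'e_p *o 'e_k.
Proof. by rewrite vderiv_cmul vderiv_uvec vderiv_delta cmul0r addr0. Qed.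

Lemma conserved_density_lhs X k p :
  \sum_i \sum_j a i j k *: ('X_j * mderiv p (mderiv i (th X))) = conservation_form X k p.
Proof.
rewrite /conservation_form -(vderiv_cmul_uvec_delta p k) /dirderiv.
rewrite (raddf_sum (vderiv p)) !(raddf_sum (frob_form _ _)) -sumrB /=.
apply: eq_bigr => i _; rewrite vderivZ raddfD /= !linearZ /= -!frob_form_vderiv [in RHS]mxE.
rewrite addrAC subrr add0r cmul_uvec_delta_entry mulr_suml; apply: eq_bigr => j _.
by rewrite -mul_mpolyC mulrA.
Qed.

Lemma conserved_densityP X : conserved_density a (th X) <->
  forall k p, conservation_form X k p = conservation_form X p k.
Proof. by split=> cons k p; move: (cons k p); rewrite !conserved_density_lhs. Qed.

Hypothesis unit1 : forall k j, a k ord0 j = (k == j)%:R.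
Hypothesis frob : forall i j l,
  \sum_k a k i j * eta k l = \sum_k eta i k * a k j l.
Hypothesis pchar0 : [pchar R] =i pred0.

Let aK_unit k j : aK k ord0 j = (k == j)%:R.
Proof. by rewrite /= unit1 mpolyC_nat. Qed.

Let aK_frob i j l :
  \sum_k aK k i j * map_mx (@mpolyC N R) eta k l =
  \sum_k map_mx (@mpolyC N R) eta i k * aK k j l.
Proof.
have := congr1 (@mpolyC N R) (frob i j l); rewrite !rmorph_sum => e.
under eq_bigr do rewrite mxE -rmorphM.
by under [RHS]eq_bigr do rewrite mxE -rmorphM.
Qed.

Let th_cmulA x y z : th ((x *o y) *o z) = th (x *o (y *o z)).
Proof. exact: frob_formA aK_frob aK_unit x y z. Qed.

Let natr_lregK m : GRing.lreg (m.+1%:R : K).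
Proof. by apply/mulfI; rewrite -mpolyC_nat mpolyC_eq0; move/pcharf0P: pchar0 => ->. Qed.

Lemma jordan_identity_mpoly : jordan_identity a -> jordan_identity aK.
Proof.
have natr_lregR m : GRing.lreg (m.+1%:R : R).
  by apply/mulfI; move/pcharf0P: pchar0 => ->.
move=> /jordan_identityP JR.
have fullR y := jordan_full_of_lin aC (jordan_lin_of_assoc aC (natr_lregR 1) (JR^~ y)).
have fullK : forall x1 x2 z y : V, jordan_full aK x1 x2 z y = 0.
  apply: (jordan_full_basis aKC) => i j k l.
  by rewrite -!(map_delta_mx (@mpolyC N R)) -map_jordan_full fullR map_mx0.
apply/jordan_identityP => x y; apply: (jordan_assoc_of_lin (@natr_lregK 2)) => {}x z.
exact: (jordan_lin_of_full (@natr_lregK 1)).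
Qed.

Section JordanDirection.
Hypothesis JK : jordan_identity aK.

Let dirderiv_cpow v m : dirderiv v (cpow aK uvec m) = dcpow aK uvec m v.
Proof. by rewrite (derivation_cpow _ _ (dirderiv_cmul v)) dirderiv_uvec. Qed.

Let vderiv_cpow i m : vderiv i (cpow aK uvec m) = dcpow aK uvec m 'e_i.
Proof. by rewrite (derivation_cpow _ _ (vderiv_cmul i)) vderiv_uvec. Qed.

Lemma hvec_cpow m : hvec m = cpow aK uvec m *+ m`!.
Proof.
elim: m => [|m IHm] /=; first by rewrite mulr1n.
by rewrite IHm raddfMn /= dirderiv_cpow (dcpow_sqr aKC JK) -mulrnA factS.
Qed.

Lemma conservation_form_cpow m k p :
  conservation_form (cpow aK uvec m) k p = conservation_form (cpow aK uvec m) p k.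
Proof.
rewrite /conservation_form !dirderiv_cpow !(dcpow_cmul aKC (@natr_lregK 1) JK).
rewrite !vderiv_cmul !vderiv_uvec !raddfD (cmulC aKC 'e_k 'e_p).
rewrite (dcpow_adjoint aKC (@natr_lregK 1) JK _ _ _ _ (raddfD _) th_cmulA) (cmulC aKC _ 'e_k).
by rewrite -!vderiv_cpow vderivC.
Qed.

End JordanDirection.

Lemma conserved_of_jordan : jordan_identity a -> forall m, conserved_density a (hdens a eta m).
Proof.
move=> /jordan_identity_mpoly JK m; rewrite hdens_hvec (hvec_cpow JK).
by apply/conserved_densityP => k p; rewrite !conservation_formMn conservation_form_cpow.
Qed.

Lemma frob_form_hvec3 : th (hvec 3) = th ((uvec *o uvec) *o (uvec *o uvec)) *+ 6.
Proof.
rewrite /= dirderiv_uvec (derivation_sqr aKC (dirderiv_cmul _)) dirderiv_uvec raddfMn /=.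
rewrite dirderiv_cmul dirderiv_uvec (derivation_sqr aKC (dirderiv_cmul _)) dirderiv_uvec.
by rewrite cmulMnr !raddfMn raddfD raddfMn /= -(th_cmulA uvec uvec) -mulrS -mulrnA.
Qed.

Lemma conservation_form_sqr k p :
  conservation_form ((uvec *o uvec) *o (uvec *o uvec)) k p =
  (th ((uvec *o 'e_p) *o (uvec *o (uvec *o 'e_k))) *+ 2
   + th ((uvec *o uvec) *o ('e_p *o (uvec *o 'e_k)))) *+ 4.
Proof.
rewrite /conservation_form !(derivation_sqr_sqr aKC (dirderiv_cmul _)) !dirderiv_uvec.
rewrite (raddfMn (vderiv p)) /= vderiv_cmul (derivation_sqr aKC (vderiv_cmul p)) vderiv_uvec.
rewrite vderiv_cmul vderiv_uvec vderiv_cmul_uvec_delta (cmulMnl aKC) cmulDr.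
by rewrite !(raddfMn th) !(raddfD th) ?(raddfMn th) addrA [X in X - _]mulrnDl addrK.
Qed.

Let mulrnK_inj m (s t : K) : s *+ m.+1 = t *+ m.+1 -> s = t.
Proof. by move=> e; apply: (@natr_lregK m); rewrite !mulr_natl. Qed.

Hypothesis eta_unit : eta \in unitmx.

Lemma frob_form_sqr_sym : conserved_density a (hdens a eta 3) -> forall k p,
  th ((uvec *o uvec) *o ('e_p *o (uvec *o 'e_k))) =
  th ((uvec *o uvec) *o ('e_k *o (uvec *o 'e_p))).
Proof.
move=> cons3 k p.
have /conserved_densityP : conserved_density a (th (((uvec *o uvec) *o (uvec *o uvec)) *+ 6)).
  by rewrite (raddfMn th) -frob_form_hvec3 -hdens_hvec.
move=> /(_ k p); rewrite !conservation_formMn => /mulrnK_inj.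
rewrite !conservation_form_sqr (frob_form_cmulCA aK_frob aK_unit aKC uvec (uvec *o 'e_p)).
by move/mulrnK_inj/addrI.
Qed.

Lemma jordan_uvec : conserved_density a (hdens a eta 3) ->
  forall y, (uvec *o uvec) *o (uvec *o y) = uvec *o ((uvec *o uvec) *o y).
Proof.
move=> /frob_form_sqr_sym sym.
have jordan_delta k : (uvec *o uvec) *o (uvec *o 'e_k) = uvec *o ((uvec *o uvec) *o 'e_k).
  apply/eqP; rewrite -subr_eq0; apply/eqP.
  apply: (bform_nondeg (eta := map_mx (@mpolyC N R) eta)) => [|p].
    by rewrite map_unitmx.
  rewrite -(frob_form_cmul aK_frob aK_unit) cmulBr raddfB /=.
  apply/eqP; rewrite subr_eq0; apply/eqP.
  have -> : th ('e_p *o ((uvec *o uvec) *o (uvec *o 'e_k))) =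
            th ((uvec *o uvec) *o ('e_p *o (uvec *o 'e_k))).
    by rewrite -th_cmulA (cmulC aKC 'e_p) th_cmulA.
  by rewrite sym (frob_form_cmulCA aK_frob aK_unit aKC uvec 'e_p) (th_cmulA (uvec *o uvec)).
have lin_l : linear (fun y => (uvec *o uvec) *o (uvec *o y)).
  by move=> s u v; rewrite !(cmulDr, cmulZr).
have lin_r : linear (fun y => uvec *o ((uvec *o uvec) *o y)).
  by move=> s u v; rewrite !(cmulDr, cmulZr).
exact: linear_row_eq lin_l lin_r jordan_delta.
Qed.

Lemma jordan_of_conserved : conserved_density a (hdens a eta 3) -> jordan_identity a.
Proof.
move=> /jordan_uvec jordanK x y.
have ev_cmul X Y : map_mx (meval (x 0)) (X *o Y) =
    cmul a (map_mx (meval (x 0)) X) (map_mx (meval (x 0)) Y).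
  by rewrite map_cmul; apply: eq_cmul => k i j; rewrite /= mevalC.
have ev_uvec : map_mx (meval (x 0)) uvec = x by apply/rowP => i; rewrite !mxE mevalXU.
have ev_const : map_mx (meval (x 0)) (map_mx (@mpolyC N R) y) = y.
  by apply/rowP => i; rewrite !mxE mevalC.
have := congr1 (map_mx (meval (x 0))) (jordanK (map_mx (@mpolyC N R) y)).
by rewrite !ev_cmul ev_uvec ev_const (cmulC aC (cmul a x y)) (cmulC aC y).
Qed.

End Densities.

Lemma is_JordanP (R : fieldType) N (a : 'I_N -> 'I_N -> 'I_N -> R) :
  is_Jordan a <-> jordan_identity a.
Proof.
have amulE x y : amul a x y = cmul a x y by apply/rowP => k; rewrite cmulE mxE.
by split=> J x y; move: (J x y); rewrite !amulE.
Qed.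

Theorem proposition3 (R : fieldType) (n : nat)
  (a : 'I_n.+1 -> 'I_n.+1 -> 'I_n.+1 -> R) (eta : 'M[R]_n.+1) :
  [pchar R] =i pred0 ->
  (* commutativity *)
  (forall k i j, a k i j = a k j i) ->
  (* e_1 is a unity: e_1 o e_j = e_j *)
  (forall k j, a k ord0 j = (k == j)%:R) ->
  (* eta symmetric, non-degenerate *)
  eta^T = eta -> eta \in unitmx ->
  (* Frobenius: <e_i o e_j, e_l> = <e_i, e_j o e_l> *)
  (forall i j l, \sum_(k < n.+1) a k i j * eta k l = \sum_(k < n.+1) eta i k * a k j l) ->
  (is_Jordan a <-> forall m : nat, conserved_density a (hdens a eta m)).
Proof.
move=> pchar0 aC unit1 _ eta_unit frob; rewrite is_JordanP; split.
  exact: conserved_of_jordan.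
by move=> cons; apply: (jordan_of_conserved aC unit1 frob pchar0 eta_unit (cons 3)).
Qed.
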